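(* Let $\Delta$ be a reflexive $4$-polytope, and let $\Sigma,\Sigma'$ be projective $\Delta$-maximal fans related by a wall crossing, with associated oriented circuit $W_+=\{\nu_i: i\in J_+\}$, $W_-=\{\nu_i:i\in J_-\}$. If $|J_+\cup J_-|=4$, then there is a $\mathbb{Z}$-linear isomorphism $N\cong\mathbb{Z}^4$ under which $W_+=\{e_1,e_2\}$ and $W_-=\{e_3,\,e_1+e_2-e_3\}$, where $e_1,\dots,e_4$ is the standard basis.
   Context: $N\cong\mathbb{Z}^4$ is a lattice with dual $M$. A lattice polytope $\Delta\subseteq N_\mathbb{R}$ with the origin in its interior is reflexive if $\Delta^*=\{m\in M_\mathbb{R}:\langle m,n\rangle\ge -1\ \forall n\in\Delta\}$ is a lattice polytope. A fan $\Sigma$ in $N_\mathbb{R}$ is $\Delta$-maximal if its set of rays equals the set of rays through the nonzero lattice points of $\Delta$ and $\Sigma$ is complete and simplicial. Let $\nu_1,\dots,\nu_r$ be the lattice points of $\partial\Delta$, and consider the secondary (GKZ) fan of $\nu_1,\dots,\nu_r$; projective $\Delta$-maximal fans correspond exactly to the maximal cones $\Gamma_{\Sigma,\emptyset}$ of its moving cone. $\Sigma$ and $\Sigma'$ are related by a wall crossing if $\Gamma_{\Sigma,\emptyset}$ and $\Gamma_{\Sigma',\emptyset}$ are distinct and share a common codimension-one face $\Gamma_{\Sigma_0,\emptyset}$. In that case there are disjoint $J_+,J_-\subseteq\{1,\dots,r\}$, each of size at least $2$, and a relation $\sum_{i\in J_+}b_i\nu_i+\sum_{i\in J_-}b_i\nu_i=0$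 with integers $b_i>0$ for $i\in J_+$ and $b_i<0$ for $i\in J_-$, such that $\{\nu_i: i\in J_+\cup J_-\}$ is a circuit (linearly dependent, every proper subset independent); after relabeling $\Sigma,\Sigma'$, $\mathrm{Cone}(\nu_i:i\in J_+)\in\Sigma$ and $\mathrm{Cone}(\nu_i:i\in J_-)\in\Sigma'$; and every maximal non-simplicial cone of $\Sigma_0$ is $\mathrm{Cone}(\nu_i: i\in J_+\cup J_0\cup J_-)$ for some $J_0$ with $|J_+\cup J_0\cup J_-|=5$, on which $\Sigma$ restricts to the fan of faces of the cones $\mathrm{Cone}(W\setminus\{w\})$, $w\in W_-$, and $\Sigma'$ to the fan of faces of $\mathrm{Cone}(W\setminus\{w\})$, $w\in W_+$, where $W=\{\nu_i:i\in J_+\cup J_0\cup J_-\}$; $\Sigma$ and $\Sigma'$ coincide outside these cones. *)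

(* N = Z^4 is modelled by row vectors 'rV[int]_4, N_R by
   'rV[R]_4 for an arbitrary real (ordered) field R, and the pairing
   M x N -> Z by the dot product. *)
From HB Require Import structures.
From mathcomp Require Import all_boot all_order all_algebra.
Set Implicit Arguments. Unset Strict Implicit. Unset Printing Implicit Defensive.
Import Order.TTheory GRing.Theory Num.Theory.
Local Open Scope ring_scope.

Definition vR (R : realFieldType) (v : 'rV[int]_4) : 'rV[R]_4 :=
  map_mx (fun z : int => z%:~R) v.

Definition dot (R : realFieldType) (n : nat) (u v : 'rV[R]_n) : R :=
  \sum_(j < n) u 0 j * v 0 j.

Definition in_conv (R : realFieldType) (k : nat) (V : 'I_k -> 'rV[int]_4)
  (x : 'rV[R]_4) : Prop :=
  exists a : 'I_k -> R, (forall j, 0 <= a j) /\ \sum_j a j = 1 /\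
    x = \sum_j a j *: vR R (V j).

Definition interior_pt (R : realFieldType) (k : nat) (V : 'I_k -> 'rV[int]_4)
  (x : 'rV[R]_4) : Prop :=
  exists eps : R, 0 < eps /\
    forall y : 'rV[R]_4, (forall j, `|y 0 j - x 0 j| < eps) -> in_conv V y.

Definition in_dual (R : realFieldType) (k : nat) (V : 'I_k -> 'rV[int]_4)
  (m : 'rV[R]_4) : Prop :=
  forall n, in_conv V n -> -1 <= dot m n.

Definition reflexive_polytope (R : realFieldType) (k : nat) (V : 'I_k -> 'rV[int]_4) : Prop :=
  interior_pt V (0 : 'rV[R]_4) /\
  exists (k' : nat) (U : 'I_k' -> 'rV[int]_4),
    forall m : 'rV[R]_4, in_dual V m <-> in_conv U m.

Definition boundary_enum (R : realFieldType) (k : nat) (V : 'I_k -> 'rV[int]_4)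
  (r : nat) (nu : 'I_r -> 'rV[int]_4) : Prop :=
  injective nu /\
  forall v : 'rV[int]_4,
    (in_conv V (vR R v) /\ ~ interior_pt V (vR R v)) <-> exists i, nu i = v.

Definition in_cone (R : realFieldType) (r : nat) (nu : 'I_r -> 'rV[int]_4)
  (S : {set 'I_r}) (x : 'rV[R]_4) : Prop :=
  exists a : 'I_r -> R, (forall i, 0 <= a i) /\
    x = \sum_(i in S) a i *: vR R (nu i).

Definition cone_sub (R : realFieldType) (r : nat) (nu : 'I_r -> 'rV[int]_4)
  (S T : {set 'I_r}) : Prop :=
  forall x : 'rV[R]_4, in_cone nu S x -> in_cone nu T x.

Definition lin_indep (R : realFieldType) (r : nat) (nu : 'I_r -> 'rV[int]_4)
  (S : {set 'I_r}) : Prop :=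
  forall c : 'I_r -> R, \sum_(i in S) c i *: vR R (nu i) = 0 ->
    forall i, i \in S -> c i = 0.

(* A simplicial fan whose rays are among the rays through the nu_i is encoded
   by the family of index sets S such that Cone(nu_i : i in S) is a cone of
   the fan (its rays being the nu_i, i in S). *)
Definition complete_simplicial_fan (R : realFieldType) (r : nat)
  (nu : 'I_r -> 'rV[int]_4) (Sig : {set {set 'I_r}}) : Prop :=
  [/\ (forall S T : {set 'I_r}, S \in Sig -> T \subset S -> T \in Sig),
      (forall S, S \in Sig -> lin_indep R nu S),
      (forall (S T : {set 'I_r}) (x : 'rV[R]_4), S \in Sig -> T \in Sig ->
          in_cone nu S x -> in_cone nu T x -> in_cone nu (S :&: T) x) &
      (forall x : 'rV[R]_4, exists2 S, S \in Sig & in_cone nu S x)].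

Definition Delta_maximal (R : realFieldType) (k : nat) (V : 'I_k -> 'rV[int]_4)
  (r : nat) (nu : 'I_r -> 'rV[int]_4) (Sig : {set {set 'I_r}}) : Prop :=
  [/\ complete_simplicial_fan R nu Sig,
      (forall i, [set i] \in Sig) &
      (forall v : 'rV[int]_4, in_conv V (vR R v) -> v != 0 ->
         exists i, exists2 c : R, 0 < c & vR R v = c *: vR R (nu i))].

(* graph of the Sig-piecewise linear function phi_psi with phi(nu_i) = psi_i *)
Definition plval (R : realFieldType) (r : nat) (nu : 'I_r -> 'rV[int]_4)
  (Sig : {set {set 'I_r}}) (psi : 'rV[R]_r) (x : 'rV[R]_4) (y : R) : Prop :=
  exists2 S, S \in Sig &
  exists a : 'I_r -> R, [/\ forall i, 0 <= a i,
     x = \sum_(i in S) a i *: vR R (nu i) & y = \sum_(i in S) a i * psi 0 i].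

(* convexity in the toric sense: phi(t x + (1-t) y) >= t phi(x) + (1-t) phi(y) *)
Definition sigma_convex (R : realFieldType) (r : nat) (nu : 'I_r -> 'rV[int]_4)
  (Sig : {set {set 'I_r}}) (psi : 'rV[R]_r) : Prop :=
  forall (x1 x2 : 'rV[R]_4) (y1 y2 y t : R), 0 <= t <= 1 ->
    plval nu Sig psi x1 y1 -> plval nu Sig psi x2 y2 ->
    plval nu Sig psi (t *: x1 + (1 - t) *: x2) y ->
    t * y1 + (1 - t) * y2 <= y.

Definition strictly_convex (R : realFieldType) (r : nat) (nu : 'I_r -> 'rV[int]_4)
  (Sig : {set {set 'I_r}}) (psi : 'rV[R]_r) : Prop :=
  forall S, S \in Sig -> (forall T, T \in Sig -> S \subset T -> T = S) ->
  exists m : 'rV[R]_4,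
    (forall i, i \in S -> dot m (vR R (nu i)) = psi 0 i) /\
    (forall x y, plval nu Sig psi x y ->
       y <= dot m x /\ (y = dot m x -> in_cone nu S x)).

Definition projective (R : realFieldType) (r : nat) (nu : 'I_r -> 'rV[int]_4)
  (Sig : {set {set 'I_r}}) : Prop :=
  exists psi : 'rV[R]_r, strictly_convex nu Sig psi.

Definition Gamma (R : realFieldType) (r : nat) (nu : 'I_r -> 'rV[int]_4)
  (Sig : {set {set 'I_r}}) : 'rV[R]_r -> Prop :=
  fun psi => sigma_convex nu Sig psi.

Definition is_face (R : realFieldType) (r : nat) (C F : 'rV[R]_r -> Prop) : Prop :=
  exists w : 'rV[R]_r, (forall psi, C psi -> 0 <= dot w psi) /\
    (forall psi, F psi <-> (C psi /\ dot w psi = 0)).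

Definition dim_ge (R : realFieldType) (r : nat) (C : 'rV[R]_r -> Prop) (d : nat) : Prop :=
  exists A : 'M[R]_(d, r), (forall i, C (row i A)) /\ \rank A = d.

Definition dim_eq (R : realFieldType) (r : nat) (C : 'rV[R]_r -> Prop) (d : nat) : Prop :=
  dim_ge C d /\ ~ dim_ge C d.+1.

Definition wall_crossing (R : realFieldType) (r : nat) (nu : 'I_r -> 'rV[int]_4)
  (Sig Sig' : {set {set 'I_r}}) : Prop :=
  (exists psi, ~ (@Gamma R r nu Sig psi <-> @Gamma R r nu Sig' psi)) /\
  exists (F : 'rV[R]_r -> Prop) (d : nat),
    [/\ is_face (@Gamma R r nu Sig) F, is_face (@Gamma R r nu Sig') F,
        dim_eq (@Gamma R r nu Sig) d.+1, dim_eq (@Gamma R r nu Sig') d.+1 &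
        dim_eq F d].

(* (Jp, Jm) is the oriented circuit associated with the wall crossing from
   Sig to Sig'; Ks is the family of index sets J_+ u J_0 u J_- of the
   maximal non-simplicial cones of Sig_0. *)
Definition assoc_circuit (R : realFieldType) (r : nat) (nu : 'I_r -> 'rV[int]_4)
  (Sig Sig' : {set {set 'I_r}}) (Jp Jm : {set 'I_r}) : Prop :=
  [/\ [&& [disjoint Jp & Jm], (2 <= #|Jp|)%N & (2 <= #|Jm|)%N],
      (exists b : 'I_r -> int,
         [/\ \sum_(i in Jp :|: Jm) b i *: nu i = 0,
             forall i, i \in Jp -> 0 < b i &
             forall i, i \in Jm -> b i < 0]),
      ~ lin_indep R nu (Jp :|: Jm) /\
        (forall T : {set 'I_r}, T \proper (Jp :|: Jm) -> lin_indep R nu T),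
      Jp \in Sig /\ Jm \in Sig' &
      exists Ks : {set {set 'I_r}},
        [/\ forall K : {set 'I_r}, K \in Ks -> (Jp :|: Jm \subset K) /\ #|K| = 5%N,
            forall K : {set 'I_r}, K \in Ks -> forall S : {set 'I_r},
              (S \in Sig /\ cone_sub R nu S K) <->
              (exists2 w, w \in Jm & S \subset K :\ w),
            forall K : {set 'I_r}, K \in Ks -> forall S : {set 'I_r},
              (S \in Sig' /\ cone_sub R nu S K) <->
              (exists2 w, w \in Jp & S \subset K :\ w) &
            forall S : {set 'I_r}, ~ (exists2 K, K \in Ks & cone_sub R nu S K) ->
              (S \in Sig <-> S \in Sig')]].

(* standard basis vector e_(k+1) of Z^4 (k = 0,1,2,3) *)
Definition std (k : nat) : 'rV[int]_4 := \row_(j < 4) ((j : nat) == k)%:R.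

From HB Require Import structures.
From mathcomp Require Import all_boot all_order all_algebra.
From mathcomp Require Import zify ring lra.
From Stdlib Require Import Classical ClassicalEpsilon.
Import Order.TTheory GRing.Theory Num.Theory.
Local Open Scope ring_scope.
Set Implicit Arguments. Unset Strict Implicit. Unset Printing Implicit Defensive.

(* Each of W_+ and W_- spans a 2-cone of a Delta-maximal fan, so the sum of the
   pair is a lattice point outside the reflexive polytope Delta, and the pair lies
   on a facet {u = -1} of Delta. Evaluating the circuit relation on the two facet
   normals puts all four vectors on the facet of W_+. For w in W_-, the cell
   W \ w is a 3-cone of Sigma whose generators lie at height -1; by
   Delta-maximality the triangle they span contains no other lattice point, so
   the generators span a saturated sublattice. Saturation of both cells forces
   the circuit coefficients to be proportional to (1, 1, -1, -1), i.e.
   nu_4 = nu_1 + nu_2 - nu_3, and a saturated independent triple extends to a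
   basis of N (Smith normal form). *)

Lemma sum_setU_disjoint (I : finType) (W : nmodType) (A B : {set I}) (F : I -> W) :
  [disjoint A & B] -> \sum_(i in A :|: B) F i = \sum_(i in A) F i + \sum_(i in B) F i.
Proof. by move=> dAB; rewrite -bigU //; apply: eq_bigl => i; rewrite !inE. Qed.

Lemma sum_set_uniq (I : finType) (W : nmodType) (A : {set I}) (s : seq I) (F : I -> W) :
  uniq s -> A =i s -> \sum_(i in A) F i = \sum_(i <- s) F i.
Proof. by move=> us As; rewrite big_uniq //; apply: eq_bigl => i; rewrite As. Qed.

Lemma disjoint_card2_pairs (T : finType) (A B : {set T}) :
  [disjoint A & B] -> (2 <= #|A|)%N -> (2 <= #|B|)%N -> #|A :|: B| = 4%N ->
  exists i1 i2 j1 j2,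
    [/\ A = [set i1; i2], B = [set j1; j2] & uniq [:: i1; i2; j1; j2]].
Proof.
move=> dAB A2 B2; rewrite cardsU (disjoint_setI0 dAB) cards0 subn0 => AB4.
have /cards2P [i1 [i2 [i12 EA]]] : #|A| == 2%N by apply/eqP; lia.
have /cards2P [j1 [j2 [j12 EB]]] : #|B| == 2%N by apply/eqP; lia.
exists i1, i2, j1, j2; split=> //.
have notB i : i \in A -> i \notin B by move=> /(disjointFr dAB) ->.
have := notB i1; have := notB i2; rewrite EA EB !inE !eqxx orbT /= !negb_or.
move=> /(_ isT) /andP[i2j1 i2j2] /(_ isT) /andP[i1j1 i1j2].
by rewrite /= i12 j12 i1j1 i1j2 i2j1 i2j2.
Qed.

Lemma setU_pairs_D1 (T : finType) (i1 i2 j1 j2 : T) :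
  uniq [:: i1; i2; j1; j2] -> ([set i1; i2] :|: [set j1; j2]) :\ j2 = [set i1; i2; j1].
Proof.
rewrite /= !inE !negb_or => /and4P[/and3P[_ _ i1j2] /andP[_ i2j2] j12 _].
apply/setP => s; rewrite !inE; case: (eqVneq s j2) => [->|_] /=; last by rewrite orbF.
by rewrite !(eq_sym j2) (negbTE i1j2) (negbTE i2j2) (negbTE j12).
Qed.

Lemma sum_scale_row_mx (R : pzRingType) m n p (I : finType) (l : I -> R)
    (A : I -> 'M[R]_(m, n)) (B : I -> 'M[R]_(m, p)) :
  \sum_i l i *: row_mx (A i) (B i) = row_mx (\sum_i l i *: A i) (\sum_i l i *: B i).
Proof.
apply: (big_ind3 (fun X Y Z => X = row_mx Y Z)) => [|x1 y1 z1 x2 y2 z2 -> ->|i _].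
- by rewrite row_mx0.
- by rewrite add_row_mx.
- by rewrite scale_row_mx.
Qed.

Section DotProduct.
Variable R : realFieldType.

Section Dim.
Variable n : nat.
Implicit Types u v w : 'rV[R]_n.

Lemma dotC u v : dot u v = dot v u.
Proof. by apply: eq_bigr => j _; rewrite mulrC. Qed.

Lemma dotDl u v w : dot (u + v) w = dot u w + dot v w.
Proof. by rewrite /dot -big_split; apply: eq_bigr => j _; rewrite mxE mulrDl. Qed.

Lemma dotZl a u w : dot (a *: u) w = a * dot u w.
Proof. by rewrite /dot mulr_sumr; apply: eq_bigr => j _; rewrite mxE mulrA. Qed.

Lemma dotBl u v w : dot (u - v) w = dot u w - dot v w.
Proof. by rewrite dotDl -scaleN1r dotZl mulN1r. Qed.

Lemma dotDr u v w : dot w (u + v) = dot w u + dot w v.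
Proof. by rewrite dotC dotDl !(dotC w). Qed.

Lemma dotZr a u w : dot w (a *: u) = a * dot w u.
Proof. by rewrite dotC dotZl dotC. Qed.

Lemma dotNr u w : dot w (- u) = - dot w u.
Proof. by rewrite -scaleN1r dotZr mulN1r. Qed.

Lemma dotBr u v w : dot w (u - v) = dot w u - dot w v.
Proof. by rewrite dotDr dotNr. Qed.

Lemma dot0r w : dot w 0 = 0.
Proof. by rewrite /dot big1 // => j _; rewrite mxE mulr0. Qed.

Lemma dot_sumr (I : finType) (P : pred I) (F : I -> 'rV[R]_n) w :
  dot w (\sum_(i | P i) F i) = \sum_(i | P i) dot w (F i).
Proof. exact: (big_morph _ (fun u v => dotDr u v w) (dot0r w)). Qed.

Lemma dot_self_eq0 u : dot u u = 0 -> u = 0.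
Proof.
move=> /eqP; rewrite psumr_eq0 => [/allP u0|j _]; last by rewrite -expr2 sqr_ge0.
apply/matrixP => i j; rewrite ord1 mxE.
by have /= := u0 j (mem_index_enum _); rewrite mulf_eq0 orbb => /eqP.
Qed.

End Dim.

Lemma dot_row_mx m n (u : 'rV[R]_m) (u' : 'rV[R]_n) (v : 'rV[R]_(m + n)) :
  dot (row_mx u u') v = dot u (lsubmx v) + dot u' (rsubmx v).
Proof.
rewrite /dot big_split_ord; congr (_ + _); apply: eq_bigr => j _.
  by rewrite row_mxEl mxE.
by rewrite row_mxEr mxE.
Qed.

End DotProduct.

Section Farkas.
Variables (R : realFieldType) (n : nat).

(* Induction on the number of generators: if b is not in the cone of the others,
   take x separating it from that cone and project everything along the first
   generator a, parallel to x, where induction applies. *)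
Lemma farkas k (F : 'I_k -> 'rV[R]_n) (b : 'rV[R]_n) :
  (forall x, (forall i, 0 <= dot (F i) x) -> 0 <= dot b x) ->
  exists2 l : 'I_k -> R, (forall i, 0 <= l i) & b = \sum_i l i *: F i.
Proof.
elim: k F b => [|k IH] F b HF.
  exists (fun=> 0) => //; rewrite big_ord0; apply: dot_self_eq0.
  apply/le_anti/andP; split; last by rewrite sumr_ge0 // => j _; rewrite -expr2 sqr_ge0.
  by have := HF (- b); rewrite dotNr oppr_ge0; apply; case.
pose a := F ord0; pose G i := F (lift ord0 i).
pose ext (t : R) (mu : 'I_k -> R) i := if unlift ord0 i is Some j then mu j else t.
have sum_ext t mu : \sum_i ext t mu i *: F i = t *: a + \sum_i mu i *: G i.
  by rewrite big_ord_recl /ext unlift_none; congr (_ + _); apply: eq_bigr => i _; rewrite liftK.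
have ext_ge0 t mu : 0 <= t -> (forall i, 0 <= mu i) -> forall i, 0 <= ext t mu i.
  by move=> t0 mu0 i; rewrite /ext; case: unlift.
case: (classic (forall x, (forall i, 0 <= dot (G i) x) -> 0 <= dot b x)) => [HG|HnG].
  have [mu mu0 ->] := IH G b HG.
  by exists (ext 0 mu); rewrite ?sum_ext ?scale0r ?add0r //; apply: ext_ge0.
have [xb [Gxb bxb]] : exists xb, (forall i, 0 <= dot (G i) xb) /\ dot b xb < 0.
  apply: NNPP => Hn; apply: HnG => x Gx; rewrite leNgt; apply/negP => bx.
  by apply: Hn; exists x.
set al := dot a xb.
have al_lt0 : al < 0.
  rewrite ltNge; apply/negP => a0.
  have : 0 <= dot b xb.
    apply: HF => i; case: (unliftP ord0 i) => [j ->|->] //; exact: Gxb.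
  by rewrite leNgt bxb.
pose f y := y - (dot y xb / al) *: a.
have dot_f y x : dot (f y) x = dot y (x - (dot a x / al) *: xb).
  rewrite /f dotBl dotZl dotBr dotZr (dotC a x) (dotC y x) (dotC y xb); ring.
have [mu mu0 Hmu] : exists2 mu : 'I_k -> R, (forall i, 0 <= mu i) &
    f b = \sum_i mu i *: f (G i).
  apply: IH => x Gx; rewrite dot_f; apply: HF => i.
  case: (unliftP ord0 i) => [j ->|->]; first by rewrite -dot_f; exact: Gx.
  by rewrite dotBr dotZr -/al mulfVK ?subrr // lt_eqF.
pose t0 := (dot b xb - \sum_i mu i * dot (G i) xb) / al.
exists (ext t0 mu); last first.
  rewrite sum_ext -[LHS](subrK ((dot b xb / al) *: a)) -/(f b) Hmu /f.
  under eq_bigr do rewrite scalerBr scalerA mulrA.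
  rewrite sumrB -scaler_suml -mulr_suml /t0 mulrBl scalerBl.
  by rewrite [RHS]addrC addrA addrAC.
apply: ext_ge0 => //; rewrite /t0 mulr_le0 ?invr_le0 ?(ltW al_lt0) // subr_le0.
by apply: le_trans (ltW bxb) _; apply: sumr_ge0 => i _; rewrite mulr_ge0.
Qed.

End Farkas.

Definition idot (u v : 'rV[int]_4) : int := \sum_(j < 4) u 0 j * v 0 j.

Section IntegerPairing.
Implicit Types u v w : 'rV[int]_4.

Lemma idotDr u v w : idot u (v + w) = idot u v + idot u w.
Proof. by rewrite /idot -big_split; apply: eq_bigr => j _; rewrite mxE mulrDr. Qed.

Lemma idotZr u a v : idot u (a *: v) = a * idot u v.
Proof. by rewrite /idot mulr_sumr; apply: eq_bigr => j _; rewrite mxE mulrCA. Qed.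

Lemma idotNr u v : idot u (- v) = - idot u v.
Proof. by rewrite -scaleN1r idotZr mulN1r. Qed.

Lemma idot0r u : idot u 0 = 0.
Proof. by rewrite /idot big1 // => j _; rewrite mxE mulr0. Qed.

Lemma idot_sumr (I : finType) (P : pred I) (F : I -> 'rV[int]_4) u :
  idot u (\sum_(i | P i) F i) = \sum_(i | P i) idot u (F i).
Proof. exact: (big_morph _ (fun v w => idotDr u v w) (idot0r u)). Qed.

End IntegerPairing.

Section RealPoints.
Variable R : realFieldType.
Implicit Types u v : 'rV[int]_4.

Lemma vRD u v : vR R (u + v) = vR R u + vR R v.
Proof. by apply/matrixP => i j; rewrite !mxE rmorphD. Qed.

Lemma vRZ a u : vR R (a *: u) = a%:~R *: vR R u.
Proof. by apply/matrixP => i j; rewrite !mxE rmorphM. Qed.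

Lemma vR0 : vR R 0 = 0.
Proof. by apply/matrixP => i j; rewrite !mxE. Qed.

Lemma vR_sum (I : finType) (P : pred I) (F : I -> 'rV[int]_4) :
  vR R (\sum_(i | P i) F i) = \sum_(i | P i) vR R (F i).
Proof. exact: (big_morph _ vRD vR0). Qed.

Lemma dot_vR u v : dot (vR R u) (vR R v) = (idot u v)%:~R.
Proof. by rewrite /dot /idot rmorph_sum; apply: eq_bigr => j _; rewrite !mxE rmorphM. Qed.

End RealPoints.

Section Convexity.
Variables (R : realFieldType) (k : nat) (V : 'I_k -> 'rV[int]_4).

Lemma in_conv_vertex j : in_conv V (vR R (V j)).
Proof.
exists (fun i => (i == j)%:R); split; first by move=> i; rewrite ler0n.
rewrite (bigD1 j) //= eqxx big1 ?addr0 => [|i /negbTE -> //]; split=> //.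
by rewrite (bigD1 j) //= eqxx scale1r big1 ?addr0 // => i /negbTE ->; rewrite scale0r.
Qed.

Lemma in_conv_dot_ge (y w : 'rV[R]_4) lo :
  in_conv V y -> (forall j, lo <= dot w (vR R (V j))) -> lo <= dot w y.
Proof.
move=> [a [a0 [a1 ->]]] Vlo; rewrite dot_sumr -[lo]mul1r -a1 mulr_suml.
by apply: ler_sum => j _; rewrite dotZr ler_wpM2l.
Qed.

Lemma in_conv_comb (I : finType) (S : {pred I}) (p : I -> 'rV[R]_4) (t : I -> R) :
  (forall i, i \in S -> in_conv V (p i)) -> (forall i, 0 <= t i) ->
  \sum_(i in S) t i = 1 -> in_conv V (\sum_(i in S) t i *: p i).
Proof.
move=> Sp t0 t1.
have /all_sig [a Ha] : forall i, {a : 'I_k -> R | i \in S ->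
    [/\ forall j, 0 <= a j, \sum_j a j = 1 & p i = \sum_j a j *: vR R (V j)]}.
  move=> i; apply: constructive_indefinite_description.
  case: (boolP (i \in S)) => [/Sp [a [? [? ?]]]|_]; first by exists a.
  by exists (fun=> 0).
exists (fun j => \sum_(i in S) t i * a i j); split; last split.
- by move=> j; apply: sumr_ge0 => i Si; have [a0 _ _] := Ha i Si; rewrite mulr_ge0.
- rewrite exchange_big -t1. apply: eq_bigr => i Si.
  by have [_ a1 _] := Ha i Si; rewrite -mulr_sumr a1 mulr1.
- under [RHS]eq_bigr do rewrite scaler_suml.
  rewrite exchange_big; apply: eq_bigr => i Si.
  by have [_ _ ->] := Ha i Si; rewrite scaler_sumr; apply: eq_bigr => j _; rewrite scalerA.
Qed.

Lemma in_dual_homogeneous_bound (x w : 'rV[R]_4) c :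
  in_conv V (0 : 'rV[R]_4) -> (forall m, in_dual V m -> -1 <= dot m x) ->
  (forall j, - c <= dot w (vR R (V j))) -> - c <= dot w x.
Proof.
move=> V0 Vx Vw; case: (ltgtP c 0) => [c_lt0|c_gt0|c0]; last subst c.
- by have := in_conv_dot_ge V0 Vw; rewrite dot0r; lra.
- have : in_dual V (c^-1 *: w).
    move=> y Vy; apply: in_conv_dot_ge Vy _ => j.
    by rewrite dotZl -(ler_pM2l c_gt0) mulrA mulfV ?gt_eqF // mul1r mulrN1.
  by move/Vx; rewrite dotZl -(ler_pM2l c_gt0) mulrA mulfV ?gt_eqF // mul1r mulrN1.
- rewrite oppr0 leNgt; apply/negP => wx_lt0.
  have : in_dual V ((- 2 / dot w x) *: w).
    move=> y Vy; apply: in_conv_dot_ge Vy _ => j; rewrite dotZl.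
    have t0 : 0 <= - 2 / dot w x.
      by rewrite mulr_le0 ?invr_le0 ?ltW //; lra.
    by have := Vw j; rewrite oppr0 => /(mulr_ge0 t0); lra.
  by move/Vx; rewrite dotZl mulrAC -mulrA mulfV ?lt_eqF // mulr1; lra.
Qed.

(* Farkas' lemma for the cone over Delta x {1}. *)
Lemma bipolar (x : 'rV[R]_4) :
  in_conv V (0 : 'rV[R]_4) -> (forall m, in_dual V m -> -1 <= dot m x) -> in_conv V x.
Proof.
move=> V0 Vx; pose one : 'rV[R]_1 := const_mx 1.
have dot_one (y : 'rV[R]_1) : dot one y = y 0 0 by rewrite /dot big_ord1 mxE mul1r.
have [l l0] : exists2 l : 'I_k -> R, (forall j, 0 <= l j) &
    row_mx x one = \sum_j l j *: row_mx (vR R (V j)) one.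
  apply: farkas => y Vy; rewrite dot_row_mx dot_one.
  suff : - rsubmx y 0 0 <= dot (lsubmx y) x by rewrite dotC; lra.
  apply: in_dual_homogeneous_bound => // j.
  by have := Vy j; rewrite dot_row_mx dot_one dotC; lra.
rewrite sum_scale_row_mx => /eq_row_mx [-> /matrixP /(_ 0 0)].
rewrite mxE summxE => l1; exists l; split=> //; split=> //.
by rewrite l1; apply: eq_bigr => j _; rewrite !mxE mulr1.
Qed.

End Convexity.

Lemma reflexive_lattice_dual (R : realFieldType) k (V : 'I_k -> 'rV[int]_4) :
  reflexive_polytope R V ->
  exists k' (U : 'I_k' -> 'rV[int]_4),
    (forall j y, in_conv V y -> -1 <= dot (vR R (U j)) y) /\
    (forall z, ~ in_conv V (vR R z) -> exists j, idot (U j) z <= -2).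
Proof.
move=> [[eps [eps0 Veps]] [k' [U HU]]].
have V0 : in_conv V (0 : 'rV[R]_4) by apply: Veps => j; rewrite mxE subrr normr0.
exists k', U; split=> [j y Vy|z Vz]; first by have := proj2 (HU _) (@in_conv_vertex R _ U j); apply.
apply: NNPP => nlow; apply: Vz; apply: bipolar => // m /HU Um.
rewrite dotC; apply: in_conv_dot_ge Um _ => j.
rewrite dotC dot_vR -[-1](rmorphN1 (intr : int -> R)) ler_int.
by rewrite leNgt; apply/negP => lt; apply: nlow; exists j; lia.
Qed.

(* Smith normal form: the diagonal entries of a free, saturated family are units. *)
Lemma free_saturated_rows_basis m n (w : 'I_m -> 'rV[int]_(m + n)) :
  (forall l : 'I_m -> int, \sum_i l i *: w i = 0 -> forall i, l i = 0) ->
  (forall (D : int) (z : 'rV[int]_(m + n)) (l : 'I_m -> int), D != 0 ->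
     D *: z = \sum_i l i *: w i -> forall i, (D %| l i)%Z) ->
  exists2 P : 'M[int]_(m + n), P \in unitmx & forall i, w i *m P = delta_mx 0 (lshift n i).
Proof.
move=> free sat; pose M : 'M[int]_(m, m + n) := \matrix_(i, j) w i 0 j.
have rowM i : row i M = w i by apply/matrixP => ? j; rewrite !mxE ord1.
have [L Lu [Rm Ru [d _ EM]]] := int_Smith_normal_form M.
set Dm := \matrix_(i, j) _ in EM; pose Li := invmx L.
have Lirow i : \sum_k Li i k *: w k = d`_i *: row (lshift n i) Rm.
  have : Li *m M = Dm *m Rm by rewrite EM -mulmxA mulKmx.
  move/(congr1 (row i)); rewrite !row_mul !mulmx_sum_row => E.
  transitivity (\sum_k row i Li 0 k *: row k M).
    by apply: eq_bigr => k _; rewrite rowM mxE.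
  rewrite E (bigD1 (lshift n i)) //= big1 ?addr0 => [|j ji]; first by rewrite !mxE eqxx mulr1n.
  rewrite !mxE; case: eqP => [ij|]; last by rewrite mulr0n scale0r.
  by move: ji; rewrite -(inj_eq val_inj) /= -ij eqxx.
have d_unit (i : 'I_m) : d`_i \is a GRing.unit.
  have dLi (k : 'I_m) : (d`_i %| Li i k)%Z.
    have [d0|d0] := eqVneq d`_i 0; last exact: sat d0 (esym (Lirow i)) k.
    by rewrite (free (Li i)) ?dvdz0 // Lirow d0 scale0r.
  have : (d`_i %| \sum_k Li i k * L k i)%Z by apply: rpred_sum => k _; apply: dvdz_mulr.
  have -> : \sum_k Li i k * L k i = 1.
    by have /matrixP /(_ i i) := mulVmx Lu; rewrite !mxE eqxx.
  by rewrite dvdz1; case: (d`_i) => [[|[|?]]|[|?]].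
pose Dd : 'M[int]_m := diag_mx (\row_i d`_i).
have EDm : Dm = row_mx Dd 0.
  apply/matrixP => i j; rewrite mxE -[j]splitK; case: (split j) => j' /=.
    by rewrite row_mxEl !mxE.
  rewrite row_mxEr mxE eqn_leq [(_ <= i)%N]leqNgt (leq_trans (ltn_ord i)) ?leq_addr //.
  by rewrite andbF.
pose A : 'M[int]_(m + n) := block_mx (L *m Dd) 0 0 1%:M *m Rm.
have Au : A \in unitmx.
  rewrite unitmx_mul Ru andbT unitmxE det_ublock det1 mulr1 det_mulmx unitrM.
  by rewrite -unitmxE Lu det_diag; apply/rpred_prod => i _; rewrite mxE.
have Arow i : row (lshift n i) A = w i.
  by rewrite /A block_mxEv mul_col_mx -rowM EM EDm rowKu mul_mx_row mulmx0.
exists (invmx A); first by rewrite unitmx_inv.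
move=> i; rewrite -Arow -row_mul mulmxV //.
by apply/matrixP => i' j; rewrite !mxE ord1 eqxx /= eq_sym.
Qed.

(* Evaluating the circuit relation on the supporting functionals u of Jp and u'
   of Jm gives opposite inequalities, which force equality. *)
Lemma circuit_heights r (nu : 'I_r -> 'rV[int]_4) (Jp Jm : {set 'I_r})
    (b : 'I_r -> int) (u u' : 'rV[int]_4) :
  [disjoint Jp & Jm] -> \sum_(i in Jp :|: Jm) b i *: nu i = 0 ->
  (forall i, i \in Jp -> 0 < b i) -> (forall i, i \in Jm -> b i < 0) ->
  (forall i, i \in Jp -> idot u (nu i) = -1) -> (forall i, -1 <= idot u (nu i)) ->
  (forall i, i \in Jm -> idot u' (nu i) = -1) -> (forall i, -1 <= idot u' (nu i)) ->
  forall i, i \in Jm -> idot u (nu i) = -1.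
Proof.
move=> dJ rel bp bm uJp u_ge u'Jm u'_ge.
have pair w : \sum_(i in Jp) b i * idot w (nu i) + \sum_(i in Jm) b i * idot w (nu i) = 0.
  rewrite -sum_setU_disjoint // -[RHS](idot0r w) -rel idot_sumr.
  by apply: eq_bigr => i _; rewrite idotZr.
have on_face (J : {set 'I_r}) w : (forall i, i \in J -> idot w (nu i) = -1) ->
    \sum_(i in J) b i * idot w (nu i) = - \sum_(i in J) b i.
  by move=> Jw; rewrite -sumrN; apply: eq_bigr => i /Jw ->; rewrite mulrN1.
pose beta := \sum_(i in Jp) b i + \sum_(i in Jm) b i.
have Em : \sum_(i in Jm) b i * (idot u (nu i) + 1) = beta.
  under eq_bigr do rewrite mulrDr mulr1.
  rewrite big_split /=; have := pair u; rewrite on_face // => /eqP.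
  by rewrite [X in X == 0]addrC subr_eq0 => /eqP ->.
have Ep : \sum_(i in Jp) b i * (idot u' (nu i) + 1) = beta.
  under eq_bigr do rewrite mulrDr mulr1.
  rewrite big_split /=; have := pair u'; rewrite (on_face Jm) // => /eqP.
  by rewrite subr_eq0 => /eqP ->; rewrite addrC.
have beta0 : beta = 0.
  apply/le_anti/andP; split.
    by rewrite -Em; apply: sumr_le0 => i /bm bi; rewrite mulr_le0_ge0 ?(ltW bi) //; have := u_ge i; lia.
  by rewrite -Ep; apply: sumr_ge0 => i /bp bi; rewrite mulr_ge0 ?(ltW bi) //; have := u'_ge i; lia.
have /eqP : \sum_(i in Jm) - (b i * (idot u (nu i) + 1)) = 0 by rewrite sumrN Em beta0 oppr0.
rewrite psumr_eq0 => [/allP Jm0 i iJm|i /bm bi]; last first.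
  by rewrite oppr_ge0 mulr_le0_ge0 ?(ltW bi) //; have := u_ge i; lia.
move: (Jm0 i (mem_index_enum _)); rewrite iJm oppr_eq0 mulf_eq0 lt_eqF ?bm //=.
by move=> /eqP; lia.
Qed.

Lemma circuit4_coeffs (b1 b2 b3 b4 : int) :
  0 < b1 -> 0 < b2 -> b3 < 0 -> b4 < 0 ->
  (b3 %| b1)%Z -> (b3 %| b2)%Z -> (b3 %| b4)%Z -> (b4 %| b3)%Z ->
  b1 + b2 + b3 + b4 = 0 -> [/\ b1 = - b3, b2 = - b3 & b4 = b3].
Proof.
move=> b1p b2p b3n b4n /dvdzP[q1 e1] /dvdzP[q2 e2] /dvdzP[q4 e4] /dvdzP[q3 e3].
have q3_gt0 : 0 < q3 by nia.
have q4_gt0 : 0 < q4 by nia.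
have q34 : q3 * q4 = 1.
  have /eqP : (q3 * q4 - 1) * b3 = 0 by rewrite mulrBl mul1r -mulrA -e4 -e3 subrr.
  by rewrite mulf_eq0 (lt_eqF b3n) orbF subr_eq0 => /eqP.
have q4_1 : q4 = 1 by nia.
rewrite e1 e2 e4 q4_1 mul1r => bsum.
have q1_lt0 : q1 < 0 by rewrite -(nmulr_lgt0 _ b3n) -e1.
have q2_lt0 : q2 < 0 by rewrite -(nmulr_lgt0 _ b3n) -e2.
have q12 : q1 + q2 = -2 by nia.
have [-> ->] : q1 = -1 /\ q2 = -1 by lia.
by rewrite !mulN1r.
Qed.

Lemma circuit4_relation (n1 n2 n3 n4 : 'rV[int]_4) (b1 b2 b3 b4 : int) :
  0 < b1 -> 0 < b2 -> b3 < 0 -> b4 < 0 ->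
  (b3 %| b1)%Z -> (b3 %| b2)%Z -> (b3 %| b4)%Z -> (b4 %| b3)%Z ->
  b1 + b2 + b3 + b4 = 0 -> b1 *: n1 + b2 *: n2 + b3 *: n3 + b4 *: n4 = 0 ->
  n4 = n1 + n2 - n3.
Proof.
move=> b1p b2p b3n b4n d1 d2 d4 d3 bsum rel.
have [e1 e2 e4] := circuit4_coeffs b1p b2p b3n b4n d1 d2 d4 d3 bsum.
have : (- b3) *: (n1 + n2 - n3 - n4) = 0.
  by rewrite -rel e1 e2 e4; apply/matrixP => i j; rewrite !mxE; ring.
move/eqP; rewrite scalemx_eq0 oppr_eq0 lt_eqF //= subr_eq0.
by move=> /eqP <-.
Qed.

Section MaximalFan.
Variables (R : realFieldType) (k : nat) (V : 'I_k -> 'rV[int]_4).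
Variables (r : nat) (nu : 'I_r -> 'rV[int]_4) (Sig : {set {set 'I_r}}).
Hypothesis nu_boundary : boundary_enum R V nu.
Hypothesis Sig_max : Delta_maximal R V nu Sig.

Lemma nu_in_conv i : in_conv V (vR R (nu i)).
Proof. by case: nu_boundary => _ /(_ (nu i)) [_ /(_ (ex_intro _ i erefl)) []]. Qed.

Lemma lin_indep_Sig S : S \in Sig -> lin_indep R nu S.
Proof. by case: Sig_max => -[_ + _ _] _ _; apply. Qed.

Lemma lin_indep_int S (l : 'I_r -> int) : S \in Sig ->
  \sum_(i in S) l i *: nu i = 0 -> forall i, i \in S -> l i = 0.
Proof.
move=> /lin_indep_Sig indep /(congr1 (vR R)); rewrite vR_sum vR0.
under eq_bigr do rewrite vRZ.
by move=> /indep + i Si => /(_ i Si) /eqP; rewrite intr_eq0 => /eqP.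
Qed.

Lemma ray_notin_cone S t : S \in Sig -> t \notin S -> ~ in_cone nu S (vR R (nu t)).
Proof.
case: Sig_max => -[_ _ meet _] rays _ SSig tS St.
have t_t : in_cone nu [set t] (vR R (nu t)).
  by exists (fun=> 1); split=> [i|]; rewrite ?ler01 // big_set1 scale1r.
have [a [_ nut0]] := meet _ _ _ (rays t) SSig t_t St.
move: nut0; rewrite (disjoint_setI0 _) ?disjoints1 // big_set0 => nut0.
have := @lin_indep_Sig [set t] (rays t) (fun=> 1).
rewrite big_set1 scale1r nut0 => /(_ erefl t (set11 t)) /eqP.
by rewrite oner_eq0.
Qed.

(* The rays of the fan are all the rays through lattice points of Delta, so a
   lattice point of Delta in a cone of the fan lies on one of its rays. *)
Lemma cone_lattice_point S (v : 'rV[int]_4) (l : 'I_r -> R) :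
  S \in Sig -> (forall s, 0 <= l s) -> vR R v = \sum_(s in S) l s *: vR R (nu s) ->
  in_conv V (vR R v) -> v != 0 ->
  exists2 t, t \in S & exists2 c, 0 < c & forall s, s \in S -> l s = c *+ (s == t).
Proof.
case: Sig_max => _ _ onray SSig l0 Ev Vv v0.
have [t [c c_gt0 Evt]] := onray v Vv v0.
have tS : t \in S.
  apply: contraT => tS; case: (ray_notin_cone SSig tS).
  exists (fun s => c^-1 * l s); split=> [s|]; first by rewrite mulr_ge0 ?l0 // invr_ge0 ltW.
  under eq_bigr do rewrite -scalerA.
  by rewrite -scaler_sumr -Ev Evt scalerA mulVf ?gt_eqF // scale1r.
exists t => //; exists c => // s Ss.
apply/eqP; rewrite -subr_eq0; apply/eqP; move: s Ss.
apply: (lin_indep_Sig SSig); under eq_bigr do rewrite scalerBl.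
rewrite sumrB -Ev Evt (bigD1 t) //= eqxx mulr1n big1 ?addr0 ?subrr // => s /andP[_].
by move=> /negbTE ->; rewrite mulr0n scale0r.
Qed.

Lemma pair_sum_notin_conv i j :
  [set i; j] \in Sig -> i != j -> ~ in_conv V (vR R (nu i + nu j)).
Proof.
move=> ijSig ij Vij.
have sum_ij : vR R (nu i + nu j) = \sum_(s in [set i; j]) 1 *: vR R (nu s).
  by rewrite big_setU1 ?big_set1 ?inE // !scale1r vRD.
have ij0 : nu i + nu j != 0.
  apply/eqP => /(congr1 (vR R)); rewrite vR0 sum_ij => E.
  by have /eqP := lin_indep_Sig ijSig E (set21 i j); rewrite oner_eq0.
have [t tij [c _ Ec]] := cone_lattice_point ijSig (fun _ => ler01) sum_ij Vij ij0.
have [s [sij st]] : exists s, s \in [set i; j] /\ s != t.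
  by move: tij; rewrite !inE => /orP[] /eqP ->; [exists j | exists i];
    rewrite !inE eqxx ?orbT // eq_sym.
by have /eqP := Ec s sij; rewrite (negbTE st) mulr0n oner_eq0.
Qed.

Lemma cone2_facet i j : reflexive_polytope R V ->
  [set i; j] \in Sig -> i != j ->
  exists u : 'rV[int]_4, [/\ idot u (nu i) = -1, idot u (nu j) = -1 &
     forall l, -1 <= idot u (nu l)].
Proof.
move=> refl ijSig ij; have [k' [U [UV Ulattice]]] := reflexive_lattice_dual refl.
have [h] := Ulattice _ (pair_sum_notin_conv ijSig ij); rewrite idotDr => Uij.
have Ulow l : -1 <= idot (U h) (nu l).
  by rewrite -(ler_int R) rmorphN1 -dot_vR; apply: UV; apply: nu_in_conv.
by exists (U h); have := Ulow i; have := Ulow j; split=> //; lia.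
Qed.

Section HeightOne.
Variables (S : {set 'I_r}) (u : 'rV[int]_4).
Hypotheses (SSig : S \in Sig) (Su : forall s, s \in S -> idot u (nu s) = -1).

Lemma idot_comb (l : 'I_r -> int) : idot u (\sum_(s in S) l s *: nu s) = - \sum_(s in S) l s.
Proof.
rewrite idot_sumr -sumrN; apply: eq_bigr => s Ss.
by rewrite idotZr Su // mulrN1.
Qed.

(* The simplex spanned by the nu_s at height -1 contains no other lattice point. *)
Lemma cone_height1_coeffs (v : 'rV[int]_4) (D : int) (l : 'I_r -> int) :
  0 < D -> (forall s, 0 <= l s) -> D *: v = \sum_(s in S) l s *: nu s ->
  idot u v = -1 -> exists2 t, t \in S & forall s, s \in S -> l s = D *+ (s == t).
Proof.
move=> D_gt0 l0 Ev uv.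
have DR0 : (D%:~R : R) != 0 by rewrite intr_eq0 gt_eqF.
have suml : \sum_(s in S) l s = D.
  by apply: oppr_inj; rewrite -idot_comb -Ev idotZr uv mulrN1.
pose w s := (l s)%:~R / (D%:~R : R).
have w0 s : 0 <= w s by rewrite divr_ge0 ?ler0z ?l0 // ltW ?ltr0z.
have Evw : vR R v = \sum_(s in S) w s *: vR R (nu s).
  apply: (scalerI DR0); rewrite -vRZ Ev vR_sum scaler_sumr.
  by apply: eq_bigr => s _; rewrite vRZ scalerA mulrC divfK.
have Vv : in_conv V (vR R v).
  rewrite Evw; apply: in_conv_comb => [s _|//|]; first exact: nu_in_conv.
  by rewrite -mulr_suml -rmorph_sum suml mulfV.
have v0 : v != 0 by apply/eqP => v0; move: uv; rewrite v0 idot0r.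
have [t tS [c _ Ec]] := cone_lattice_point SSig w0 Evw Vv v0.
have c1 : c = 1.
  have : dot (vR R u) (vR R v) = - c.
    rewrite Evw dot_sumr (bigD1 t) //= big1 => [|s /andP[Ss st]]; last first.
      by rewrite dotZr Ec // (negbTE st) mulr0n mul0r.
    by rewrite addr0 dotZr dot_vR Su // rmorphN1 Ec // eqxx mulr1n mulrN1.
  by rewrite dot_vR uv rmorphN1 => /oppr_inj.
exists t => // s Ss; apply/eqP.
rewrite -(eqr_int R) -(inj_eq (mulIf (invr_neq0 DR0))) -/(w s) Ec // c1.
by rewrite rmorphMn mulrnAl mulfV.
Qed.

Hypothesis S3 : #|S| = 3%N.

(* Reflecting through the centre of the parallelepiped exchanges heights -1
   and -2, so a nonzero remainder at either height contradicts emptiness. *)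
Lemma cone3_remainders_eq0 (z : 'rV[int]_4) (D : int) (rho : 'I_r -> int) :
  0 < D -> (forall s, 0 <= rho s < D) -> D *: z = \sum_(s in S) rho s *: nu s ->
  forall s, s \in S -> rho s = 0.
Proof.
move=> D_gt0 rho_bd Ez; set h := idot u z.
have rho0 s : 0 <= rho s by case/andP: (rho_bd s).
have Dh : D * h = - \sum_(s in S) rho s.
  by rewrite -idot_comb -Ez idotZr.
have sum_ge0 : 0 <= \sum_(s in S) rho s by apply: sumr_ge0.
have sum_lt : \sum_(s in S) rho s < 3 * D.
  apply: (@le_lt_trans _ _ (\sum_(s in S) (D - 1))).
    by apply: ler_sum => s _; have := rho_bd s; lia.
  by rewrite sumr_const S3 -mulr_natl; lia.
have : h = 0 \/ h = -1 \/ h = -2 by nia.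
case=> [h0|[h1|h2]] s Ss.
- have /eqP : \sum_(s in S) rho s = 0 by apply: oppr_inj; rewrite -Dh h0 mulr0.
  by rewrite psumr_eq0 // => /allP /(_ s (mem_index_enum _)) /implyP /(_ Ss) /eqP.
- have [t tS Et] := cone_height1_coeffs D_gt0 rho0 Ez h1.
  by have := rho_bd t; rewrite Et // eqxx mulr1n ltxx andbF.
have uS : idot u (\sum_(s in S) nu s) = -3.
  by rewrite idot_sumr (eq_bigr (fun=> -1)) => [|t /Su //]; rewrite sumr_const S3.
have Ew : D *: (\sum_(s in S) nu s - z) = \sum_(s in S) (D - rho s) *: nu s.
  by rewrite scalerBr Ez scaler_sumr -sumrB; apply: eq_bigr => t _; rewrite scalerBl.
have uw : idot u (\sum_(s in S) nu s - z) = -1 by rewrite idotDr idotNr uS -/h h2.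
have Drho0 t : 0 <= D - rho t by have := rho_bd t; lia.
have [t tS Et] := cone_height1_coeffs D_gt0 Drho0 Ew uw.
have /card_gt0P [s' s'St] : (0 < #|S :\ t|)%N by move: S3; rewrite (cardsD1 t) tS /=; lia.
move: s'St; rewrite in_setD1 => /andP[s't s'S].
by have := Et s' s'S; rewrite (negbTE s't) mulr0n => /eqP; rewrite subr_eq0 => /eqP Ds';
  have := rho_bd s'; rewrite -Ds' ltxx andbF.
Qed.

Lemma cone3_saturated (z : 'rV[int]_4) (D : int) (l : 'I_r -> int) :
  D != 0 -> D *: z = \sum_(s in S) l s *: nu s -> forall s, s \in S -> (D %| l s)%Z.
Proof.
move=> D0 Ez; wlog D_gt0 : D z D0 Ez / 0 < D => [gen|].
  have [D_lt0|D_gt0] : D < 0 \/ 0 < D by move: D0; rewrite neq_lt => /orP.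
    move=> s Ss; have := gen (- D) (- z); rewrite oppr_eq0 oppr_gt0 scaleNr scalerN opprK.
    by move=> /(_ D0 Ez D_lt0 s Ss); rewrite !dvdzE abszN.
  exact: gen D z D0 Ez D_gt0.
pose rho s := (l s %% D)%Z.
have rho_bd s : 0 <= rho s < D by rewrite modz_ge0 ?ltz_pmod.
have Erho : D *: (z - \sum_(s in S) (l s %/ D)%Z *: nu s) = \sum_(s in S) rho s *: nu s.
  rewrite scalerBr Ez scaler_sumr -sumrB; apply: eq_bigr => s _.
  by rewrite scalerA -scalerBl {1}(divz_eq (l s) D) mulrC addrC addKr.
move=> s Ss; apply/dvdz_mod0P.
exact: (cone3_remainders_eq0 D_gt0 rho_bd Erho Ss).
Qed.

End HeightOne.

Lemma cone3_lattice_basis a b c (u : 'rV[int]_4) :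
  [set a; b; c] \in Sig -> uniq [:: a; b; c] ->
  idot u (nu a) = -1 -> idot u (nu b) = -1 -> idot u (nu c) = -1 ->
  exists2 P : 'M[int]_4, P \in unitmx &
    [/\ nu a *m P = std 0, nu b *m P = std 1 & nu c *m P = std 2].
Proof.
move=> SSig uabc ua ub uc; set S := [set a; b; c].
have ES : S =i [:: a; b; c] by move=> s; rewrite !inE -!orbA.
have Su s : s \in S -> idot u (nu s) = -1 by rewrite ES !inE => /or3P[] /eqP ->.
have S3 : #|S| = 3%N by rewrite (eq_card ES); apply/card_uniqP.
pose e (i : 'I_3) := nth a [:: a; b; c] i.
pose coef (l : 'I_3 -> int) s := l (inord (index s [:: a; b; c])).
have coef_e l i : coef l (e i) = l i by rewrite /coef index_uniq // inord_val.
have e_S i : e i \in S by rewrite ES mem_nth.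
have sum_S (l : 'I_3 -> int) : \sum_i l i *: nu (e i) = \sum_(s in S) coef l s *: nu s.
  rewrite (sum_set_uniq _ uabc ES) (big_nth a) big_mkord.
  by apply: eq_bigr => i _; rewrite -/(e i) coef_e.
have [P Pu eP] : exists2 P : 'M[int]_(3 + 1), P \in unitmx &
    forall i, nu (e i) *m P = delta_mx 0 (lshift 1 i).
  apply: free_saturated_rows_basis.
- move=> l; rewrite sum_S => /(lin_indep_int SSig) l0 i.
  by rewrite -coef_e l0.
- move=> D z l D0; rewrite sum_S => Ez i.
  by rewrite -coef_e (cone3_saturated SSig Su S3 D0 Ez).
have std_delta (i : 'I_3) : std i = delta_mx 0 (lshift 1 i).
  by apply/matrixP => ? j; rewrite !mxE ord1 eqxx.
exists P => //; split.
- by rewrite (std_delta (Ordinal (isT : (0 < 3)%N))) -eP.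
- by rewrite (std_delta (Ordinal (isT : (1 < 3)%N))) -eP.
- by rewrite (std_delta (Ordinal (isT : (2 < 3)%N))) -eP.
Qed.

Lemma circuit_cell_divisibility (J : {set 'I_r}) (b : 'I_r -> int) (u : 'rV[int]_4) w :
  #|J| = 4%N -> (forall s, s \in J -> idot u (nu s) = -1) ->
  \sum_(i in J) b i *: nu i = 0 -> w \in J -> b w != 0 -> J :\ w \in Sig ->
  forall s, s \in J :\ w -> (b w %| b s)%Z.
Proof.
move=> J4 uJ rel wJ bw0 cellSig s sc.
have cell3 : #|J :\ w| = 3%N by move: J4; rewrite (cardsD1 w) wJ /=; lia.
have uc t : t \in J :\ w -> idot u (nu t) = -1 by move=> /setD1P[_ /uJ].
have Ew : (- b w) *: nu w = \sum_(i in J :\ w) b i *: nu i.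
  by apply/eqP; rewrite scaleNr eq_sym -addr_eq0 addrC -big_setD1 ?rel.
have /(_ s sc) : forall t, t \in J :\ w -> (- b w %| b t)%Z.
  by apply: (cone3_saturated cellSig uc cell3 _ Ew); rewrite oppr_eq0.
by rewrite !dvdzE abszN.
Qed.

Lemma circuit4_normal_form (Jp Jm : {set 'I_r}) i1 i2 j1 j2 (b : 'I_r -> int)
    (u : 'rV[int]_4) :
  Jp = [set i1; i2] -> Jm = [set j1; j2] -> uniq [:: i1; i2; j1; j2] ->
  (forall w, w \in Jm -> (Jp :|: Jm) :\ w \in Sig) ->
  (forall s, s \in Jp :|: Jm -> idot u (nu s) = -1) ->
  \sum_(i in Jp :|: Jm) b i *: nu i = 0 ->
  (forall i, i \in Jp -> 0 < b i) -> (forall i, i \in Jm -> b i < 0) ->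
  nu j2 = nu i1 + nu i2 - nu j1.
Proof.
move=> EJp EJm uJ cells uJm rel bp bm.
have EJ : Jp :|: Jm =i [:: i1; i2; j1; j2] by move=> s; rewrite EJp EJm !inE -!orbA.
have J4 : #|Jp :|: Jm| = 4%N by rewrite (eq_card EJ); apply/card_uniqP.
have sum0 : \sum_(i in Jp :|: Jm) b i = 0.
  by apply: oppr_inj; rewrite oppr0 -(idot_comb uJm) rel idot0r.
have Jm1 : j1 \in Jm by rewrite EJm set21.
have Jm2 : j2 \in Jm by rewrite EJm set22.
have div w s : w \in Jm -> s != w -> s \in [:: i1; i2; j1; j2] -> (b w %| b s)%Z.
  move=> wJm sw sJ; apply: (circuit_cell_divisibility J4 uJm rel _ _ (cells w wJm)).
  - by rewrite in_setU wJm orbT.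
  - by rewrite lt_eqF ?bm.
  - by rewrite in_setD1 sw EJ.
move: (uJ); rewrite /= !inE !negb_or => /and4P[/and3P[i12 i1j1 i1j2] /andP[i2j1 i2j2] j12 _].
rewrite (sum_set_uniq _ uJ EJ) !big_cons big_nil addr0 !addrA in sum0.
rewrite (sum_set_uniq _ uJ EJ) !big_cons big_nil addr0 !addrA in rel.
apply: circuit4_relation sum0 rel.
- by rewrite bp // EJp set21.
- by rewrite bp // EJp set22.
- exact: bm.
- exact: bm.
- by rewrite div ?inE ?eqxx.
- by rewrite div ?inE ?eqxx ?orbT.
- by rewrite div ?inE ?eqxx ?orbT // eq_sym.
- by rewrite div ?inE ?eqxx ?orbT.
Qed.

End MaximalFan.

(* The circuit relation shows that Jp and Jm cannot both be cones of the same
   fan, so some non-simplicial cone K of Sig_0 exists, and Sig subdivides it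
   into the cells Cone(K \ w), w in Jm. *)
Lemma circuit_cells_in_fan (R : realFieldType) r (nu : 'I_r -> 'rV[int]_4)
    (Sig Sig' : {set {set 'I_r}}) (Jp Jm : {set 'I_r}) :
  complete_simplicial_fan R nu Sig -> assoc_circuit R nu Sig Sig' Jp Jm ->
  forall w, w \in Jm -> (Jp :|: Jm) :\ w \in Sig.
Proof.
move=> [_ indep meet _] [/and3P[dJ Jp2 _] [b [rel bp bm]] _ [JpSig JmSig']].
move=> [Ks [KJ KSig _ outside]] w wJm.
have [K KKs] : exists K, K \in Ks.
  apply: NNPP => noK.
  have JmSig : Jm \in Sig by apply/(outside Jm) => // -[K KKs _]; apply: noK; exists K.
  have rel' : \sum_(i in Jp) b i *: nu i = \sum_(i in Jm) (- b i) *: nu i.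
    move: rel; rewrite sum_setU_disjoint // => /eqP; rewrite addr_eq0 => /eqP ->.
    by rewrite -sumrN; apply: eq_bigr => i _; rewrite scaleNr.
  pose a i : R := `|b i|%:~R.
  have a0 i : 0 <= a i by rewrite ler0z normr_ge0.
  pose p := \sum_(i in Jp) a i *: vR R (nu i).
  have Jp_p : in_cone nu Jp p by exists a.
  have Jm_p : in_cone nu Jm p.
    exists a; split=> //; rewrite /p.
    transitivity (vR R (\sum_(i in Jp) b i *: nu i)).
      by rewrite vR_sum; apply: eq_bigr => i /bp bi; rewrite vRZ /a gtr0_norm.
    by rewrite rel' vR_sum; apply: eq_bigr => i /bm bi; rewrite vRZ /a ltr0_norm.
  have [c [_]] := meet _ _ p JpSig JmSig Jp_p Jm_p.
  rewrite (disjoint_setI0 dJ) big_set0 => p0.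
  have [i iJp] : exists i, i \in Jp by apply/card_gt0P; lia.
  have /eqP := indep Jp JpSig a p0 i iJp.
  by rewrite intr_eq0 normr_eq0 gt_eqF ?bp.
have [JK _] := KJ K KKs.
by have [] := (KSig K KKs _).2 (ex_intro2 _ _ w wJm (setSD _ JK)).
Qed.

Theorem lemma4 (R : realFieldType) (k : nat) (V : 'I_k -> 'rV[int]_4)
  (r : nat) (nu : 'I_r -> 'rV[int]_4)
  (Sig Sig' : {set {set 'I_r}}) (Jp Jm : {set 'I_r}) :
  @reflexive_polytope R k V ->
  @boundary_enum R k V r nu ->
  @Delta_maximal R k V r nu Sig -> @projective R r nu Sig ->
  @Delta_maximal R k V r nu Sig' -> @projective R r nu Sig' ->
  @wall_crossing R r nu Sig Sig' ->
  @assoc_circuit R r nu Sig Sig' Jp Jm ->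
  #|Jp :|: Jm| = 4%N ->
  exists P : 'M[int]_4, P \in unitmx /\
    exists i1 i2 j1 j2 : 'I_r,
      [/\ Jp = [set i1; i2], Jm = [set j1; j2],
          nu i1 *m P = std 0 /\ nu i2 *m P = std 1 &
          nu j1 *m P = std 2 /\ nu j2 *m P = std 0 + std 1 - std 2].
Proof.
move=> refl nu_bd Sig_max _ Sig'_max _ _ circ J4.
have [/and3P[dJ Jp2 Jm2] [b [rel bp bm]] _ [JpSig JmSig'] _] := circ.
have [i1 [i2 [j1 [j2 [EJp EJm uJ]]]]] := disjoint_card2_pairs dJ Jp2 Jm2 J4.
move: (uJ); rewrite /= !inE !negb_or => /and4P[/and3P[i12 _ _] _ j12 _].
rewrite EJp in JpSig; rewrite EJm in JmSig'.
have [u [ui1 ui2 u_ge]] := cone2_facet nu_bd Sig_max refl JpSig i12.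
have [u' [u'j1 u'j2 u'_ge]] := cone2_facet nu_bd Sig'_max refl JmSig' j12.
have uJp s : s \in Jp -> idot u (nu s) = -1 by rewrite EJp !inE => /orP[] /eqP ->.
have u'Jm s : s \in Jm -> idot u' (nu s) = -1 by rewrite EJm !inE => /orP[] /eqP ->.
have uJm := circuit_heights dJ rel bp bm uJp u_ge u'Jm u'_ge.
have u_J s : s \in Jp :|: Jm -> idot u (nu s) = -1 by rewrite in_setU => /orP[/uJp|/uJm].
have [fan _ _] := Sig_max.
have cells := circuit_cells_in_fan fan circ.
have nu_j2 := circuit4_normal_form nu_bd Sig_max EJp EJm uJ cells u_J rel bp bm.
have cell : [set i1; i2; j1] \in Sig.
  by rewrite -(setU_pairs_D1 uJ) -EJp -EJm cells // EJm set22.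
have uniq3 : uniq [:: i1; i2; j1] by apply: subseq_uniq uJ; rewrite /= !eqxx.
have uj1 : idot u (nu j1) = -1 by rewrite uJm // EJm set21.
have [P Pu [P1 P2 P3]] := cone3_lattice_basis nu_bd Sig_max cell uniq3 ui1 ui2 uj1.
exists P; split=> //; exists i1, i2, j1, j2; split=> //.
by rewrite nu_j2 mulmxBl mulmxDl P1 P2 P3.
Qed.
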